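(* Let $G$ be a graph, $m\geq 2$, and $\mathcal{H}=(L,H)$ an $m$-fold cover of $G$. Let $e=uv\in E(G)$ and $H'=H-E_H(L(u),L(v))$, so that $\mathcal{H}'=(L,H')$ is an $m$-fold cover of $G-\{e\}$. If there is a natural bijection between the $\mathcal{H}'$-colorings of $G-\{e\}$ and the proper $m$-colorings of $G-\{e\}$, then $$P_{DP}(G,\mathcal{H})\geq P(G-\{e\},m)-\max\left\{P(G-\{e\},m)-P(G,m),\ \frac{P(G,m)}{m-1}\right\}.$$ Moreover, there exists an $m$-fold cover $\mathcal{H}^*=(L,H^* )$ of $G$ with $$P_{DP}(G,\mathcal{H}^* )=P(G-\{e\},m)-\max\left\{P(G-\{e\},m)-P(G,m),\ \frac{P(G,m)}{m-1}\right\}.$$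
   Context: All graphs are finite and simple; $G-\{e\}$ is $G$ with edge $e$ deleted. $P(G,m)$ denotes the chromatic polynomial of $G$. A cover of a graph $G$ is a pair $\mathcal{H}=(L,H)$ where $H$ is a graph and $L:V(G)\to\mathcal{P}(V(H))$ satisfies: (1) the sets $L(u)$, $u\in V(G)$, partition $V(H)$; (2) for every $u$, $H[L(u)]$ is complete; (3) if $E_H(L(u),L(v))\neq\emptyset$ then $u=v$ or $uv\in E(G)$; (4) if $uv\in E(G)$ then $E_H(L(u),L(v))$ is a matching (possibly empty). Here $E_H(S,U)$ is the set of edges of $H$ between $S$ and $U$. The cover is $m$-fold if $|L(u)|=m$ for all $u$. An $\mathcal{H}$-coloring is an independent set of $H$ of size $|V(G)|$; $P_{DP}(G,\mathcal{H})$ is the number of $\mathcal{H}$-colorings. For an $m$-fold cover $\mathcal{H}=(L,H)$ of $G$, we say there is a natural bijection between the $\mathcal{H}$-colorings of $G$ and the proper $m$-colorings of $G$ if the elements of each $L(v)$ can be labeled $L(v)=\{(v,j):j\in[m]\}$ so that whenever $uv\in E(G)$, $(u,j)$ and $(v,j)$ are adjacent in $H$ for every $j\in[m]$. *)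

From HB Require Import structures.
From mathcomp Require Import all_boot all_order all_algebra.
Set Implicit Arguments. Unset Strict Implicit. Unset Printing Implicit Defensive.
Import Order.TTheory GRing.Theory Num.Theory.

Definition simple_graph (V : finType) (adj : rel V) : Prop :=
  (forall x y, adj x y = adj y x) /\ (forall x, ~~ adj x x).

Definition del_edge (V : finType) (adj : rel V) (u v : V) : rel V :=
  fun x y => adj x y && ~~ (((x == u) && (y == v)) || ((x == v) && (y == u))).

Definition chrom (V : finType) (adj : rel V) (m : nat) : nat :=
  #|[set f : {ffun V -> 'I_m} | [forall x, forall y, adj x y ==> (f x != f y)]]|.

Definition is_cover (V W : finType) (adjG : rel V) (L : V -> {set W}) (H : rel W) : Prop :=
  simple_graph H /\
  (forall w, exists u, w \in L u) /\
  (forall u u' w, w \in L u -> w \in L u' -> u = u') /\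
  (forall u x y, x \in L u -> y \in L u -> x != y -> H x y) /\
  (forall u v x y, x \in L u -> y \in L v -> H x y -> u = v \/ adjG u v) /\
  (forall u v, adjG u v -> forall x y y', x \in L u -> y \in L v -> y' \in L v ->
      H x y -> H x y' -> y = y').

Definition is_mfold_cover (V W : finType) (adjG : rel V) (L : V -> {set W}) (H : rel W)
    (m : nat) : Prop :=
  is_cover adjG L H /\ forall u, #|L u| = m.

(* H-colorings: independent sets of H of size |V(G)|. *)
Definition P_DP (V W : finType) (L : V -> {set W}) (H : rel W) : nat :=
  #|[set I : {set W} | [forall x in I, forall y in I, ~~ H x y] && (#|I| == #|V|)]|.

Definition del_cross (V W : finType) (L : V -> {set W}) (H : rel W) (u v : V) : rel W :=
  fun x y => H x y && ~~ (((x \in L u) && (y \in L v)) || ((x \in L v) && (y \in L u))).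

(* natural bijection between (L,H)-colorings of G and proper m-colorings of G:
   a labeling L(v) = {(v,j) : j in [m]} with (u,j)(v,j) in E(H) for uv in E(G). *)
Definition natural_bijection (V W : finType) (adjG : rel V) (L : V -> {set W}) (H : rel W)
    (m : nat) : Prop :=
  exists lab : V -> 'I_m -> W,
    (forall v, injective (lab v)) /\
    (forall v, L v = [set lab v j | j in 'I_m]) /\
    (forall u v, adjG u v -> forall j, H (lab u j) (lab v j)).

From HB Require Import structures.
From mathcomp Require Import all_boot all_order all_algebra perm.
Set Implicit Arguments. Unset Strict Implicit. Unset Printing Implicit Defensive.
Import Order.TTheory GRing.Theory Num.Theory.

(* Let G' = G - e and let N(i,j) count the proper m-colourings c of G' with
   c(u) = i and c(v) = j.  Permuting colours shows N(i,i) = a and N(i,j) = b for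
   i <> j, so P(G',m) = m a + m(m-1) b and P(G,m) = m(m-1) b, and the right-hand
   side of the bound is P(G',m) - m max(a,b).  When H' is the canonical cover of
   G', the H-colourings are the colourings c of G' whose pair (c u, c v) is not an
   edge of the matching E_H(L(u),L(v)); a matching meets each row of N at most once,
   whence the bound.  It is attained by the cover whose uv-matching is the identity
   if a >= b, and a derangement of the colours otherwise. *)

Section ProperColorings.

Variables (V C : finType) (adj : rel V) (u v : V).

Definition proper_coloring (c : {ffun V -> C}) : bool :=
  [forall x, forall y, adj x y ==> (c x != c y)].

Definition nproper_at (i j : C) : nat :=
  #|[set c | [&& proper_coloring c, c u == i & c v == j]]|.

Lemma card_proper_pairs (r : rel C) :
  #|[set c | proper_coloring c && r (c u) (c v)]| =
  \sum_i \sum_j r i j * nproper_at i j.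
Proof.
rewrite -sum1_card (partition_big (fun c : {ffun V -> C} => (c u, c v)) predT) //=.
rewrite pair_bigA.
apply: eq_bigr => [[i j]] _ /=.
rewrite /nproper_at -sum1_card; case: (boolP (r i j)) => rij.
- rewrite mul1n; apply: eq_bigl => c; rewrite !inE xpair_eqE.
  by case: (eqVneq (c u) i) => [->|_]; case: (eqVneq (c v) j) => [->|_];
    rewrite ?rij ?andbF ?andbT.
- rewrite mul0n big_pred0 // => c; rewrite !inE xpair_eqE.
  by case: (eqVneq (c u) i) => [->|_]; case: (eqVneq (c v) j) => [->|_];
    rewrite ?(negbTE rij) ?andbF.
Qed.

Lemma card_proper_avoiding (r : rel C) :
  #|[set c | proper_coloring c && ~~ r (c u) (c v)]| =
  #|[set c | proper_coloring c]| - \sum_i \sum_j r i j * nproper_at i j.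
Proof.
rewrite -card_proper_pairs.
set P := [set c | proper_coloring c]; set R := [set c : {ffun V -> C} | r (c u) (c v)].
have -> : [set c | proper_coloring c && r (c u) (c v)] = P :&: R.
  by apply/setP => c; rewrite !inE.
rewrite -(cardsID R P) addKn setDE.
by apply: eq_card => c; rewrite !inE.
Qed.

Lemma card_proper_colorings :
  #|[set c | proper_coloring c]| = \sum_i \sum_j nproper_at i j.
Proof.
have -> : [set c | proper_coloring c] = [set c | proper_coloring c && true].
  by apply/setP => c; rewrite !inE andbT.
rewrite (card_proper_pairs (fun _ _ => true)).
by apply: eq_bigr => i _; apply: eq_bigr => j _; rewrite mul1n.
Qed.

Lemma nproper_at_perm (p : {perm C}) i j : nproper_at (p i) (p j) = nproper_at i j.
Proof.
suff le (q : {perm C}) i' j' : nproper_at i' j' <= nproper_at (q i') (q j').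
  by apply/eqP; rewrite eqn_leq le -{2}(permK p i) -{2}(permK p j) le.
pose recolor (c : {ffun V -> C}) := [ffun x => q (c x)].
have recolor_inj : injective recolor.
  move=> c c' /ffunP eq_cc'; apply/ffunP => x; apply: (@perm_inj _ q).
  by move: (eq_cc' x); rewrite !ffunE.
rewrite /nproper_at -(card_imset _ recolor_inj); apply/subset_leq_card/subsetP => d /imsetP [c].
rewrite !inE => /and3P [proper_c /eqP <- /eqP <-] ->.
rewrite !ffunE !eqxx !andbT; apply/forallP => x; apply/forallP => y.
by rewrite !ffunE (inj_eq perm_inj); move/forallP/(_ x)/forallP: proper_c.
Qed.

Lemma nproper_at_diag i j : nproper_at i i = nproper_at j j.
Proof. by rewrite -(nproper_at_perm (tperm i j)) tpermL. Qed.

Lemma nproper_at_offdiag i j i' j' : i != j -> i' != j' -> nproper_at i j = nproper_at i' j'.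
Proof.
move=> neq_ij neq_ij'; set t := tperm i i' j.
have neq_ti' : t != i' by rewrite -(tpermL i i') (inj_eq perm_inj) eq_sym.
rewrite -(nproper_at_perm (tperm i i' * tperm t j')) !permM tpermL -/t tpermL.
by rewrite tpermD // eq_sym.
Qed.

End ProperColorings.

Section EdgeDeletion.

Variables (V : finType) (adj : rel V) (u v : V).
Hypothesis adj_sym : forall x y, adj x y = adj y x.

Lemma del_edgeW x y : del_edge adj u v x y -> adj x y.
Proof. by case/andP. Qed.

Lemma del_edge_sym x y : del_edge adj u v x y = del_edge adj u v y x.
Proof.
rewrite /del_edge adj_sym; congr (_ && ~~ _).
by rewrite orbC; congr (_ || _); rewrite andbC.
Qed.

Lemma proper_coloring_del_edge (C : finType) (c : {ffun V -> C}) :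
  adj u v ->
  proper_coloring adj c = proper_coloring (del_edge adj u v) c && (c u != c v).
Proof.
move=> adj_uv; apply/idP/andP => [proper_c | [proper'_c neq_cuv]].
  split; last exact: (implyP (forallP (forallP proper_c u) v)).
  apply/forallP => x; apply/forallP => y; apply/implyP => /del_edgeW.
  exact: (implyP (forallP (forallP proper_c x) y)).
apply/forallP => x; apply/forallP => y; apply/implyP => adj_xy.
have [/orP [] /andP [/eqP -> /eqP ->] | not_uv] :=
  boolP ((x == u) && (y == v) || (x == v) && (y == u)); first by [].
  by rewrite eq_sym.
apply: (implyP (forallP (forallP proper'_c x) y)).
by rewrite /del_edge adj_xy not_uv.
Qed.

End EdgeDeletion.

Section ConstantPairCounts.

Variables (C : finType) (N : C -> C -> nat) (a b : nat).
Hypothesis N_diag : forall i, N i i = a.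
Hypothesis N_offdiag : forall i j, i != j -> N i j = b.

Lemma sum_pair_counts : \sum_i \sum_j N i j = #|C| * (a + #|C|.-1 * b).
Proof.
rewrite -sum_nat_const; apply: eq_bigr => i _.
rewrite (bigD1 i) //= N_diag -(cardC1 i) -sum_nat_const; congr (_ + _).
by apply: eq_bigr => j; rewrite eq_sym => /N_offdiag.
Qed.

Lemma sum_offdiag_pair_counts :
  \sum_i \sum_j (i != j) * N i j = #|C| * (#|C|.-1 * b).
Proof.
rewrite -sum_nat_const; apply: eq_bigr => i _.
rewrite (bigD1 i) //= eqxx mul0n add0n -(cardC1 i) -sum_nat_const.
apply: eq_bigr => j neq_ji; have neq_ij : i != j by rewrite eq_sym.
by rewrite neq_ij mul1n N_offdiag.
Qed.

Lemma sum_matching_pair_counts_le (h : rel C) :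
    (forall i j j', h i j -> h i j' -> j = j') ->
  \sum_i \sum_j h i j * N i j <= #|C| * maxn a b.
Proof.
move=> h_fun; rewrite -sum_nat_const; apply: leq_sum => i _.
case: (pickP (h i)) => [j0 hij0 | no_h]; last by rewrite big1 // => j _; rewrite no_h.
rewrite (bigD1 j0) //= big1 => [|j neq_jj0]; last first.
  by case hij: (h i j); rewrite // (h_fun _ _ _ hij hij0) eqxx in neq_jj0.
rewrite hij0 mul1n addn0; case: (eqVneq i j0) => [<-|/N_offdiag->].
  by rewrite N_diag leq_maxl.
exact: leq_maxr.
Qed.

Lemma sum_graph_pair_counts (s : C -> C) :
    (forall i, N i (s i) = maxn a b) ->
  \sum_i \sum_j (j == s i) * N i j = #|C| * maxn a b.
Proof.
move=> N_s; rewrite -sum_nat_const; apply: eq_bigr => i _.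
rewrite (bigD1 (s i)) //= eqxx mul1n N_s big1 ?addn0 // => j.
by move/negbTE->.
Qed.

End ConstantPairCounts.

Lemma ordS_neq n (i : 'I_n) : 1 < n -> ordS i != i.
Proof.
move=> n_gt1; rewrite -val_eqE /=; case: (ltnP i.+1 n) => [lt_i1n | ge_i1n].
  by rewrite modn_small // gtn_eqF.
have i1_eq_n : i.+1 = n by apply/eqP; rewrite eqn_leq ltn_ord.
by rewrite i1_eq_n modnn eq_sym -lt0n -ltnS i1_eq_n.
Qed.

Lemma exists_derangement (C : finType) (i0 j0 : C) :
  i0 != j0 -> exists s : {perm C}, forall i, s i != i.
Proof.
move=> neq_i0j0; have card_gt1 : 1 < #|C| by apply/card_gt1P; exists i0, j0.
pose f (x : C) := enum_val (ordS (enum_rank x)).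
have f_inj : injective f by move=> x y /enum_val_inj /ordS_inj /enum_rank_inj.
exists (perm f_inj) => i; rewrite permE /f; apply: contra (ordS_neq (enum_rank i) card_gt1).
by move=> /eqP/(congr1 enum_rank); rewrite enum_valK => ->.
Qed.

Lemma exists_labeling (V W : finType) (L : V -> {set W}) m :
    (forall a, #|L a| = m) ->
  exists lab : V -> 'I_m -> W,
    (forall a, injective (lab a)) /\ (forall a, L a = [set lab a j | j in 'I_m]).
Proof.
move=> card_L.
pose lab a (j : 'I_m) := enum_val (cast_ord (esym (card_L a)) j).
have lab_inj a : injective (lab a) by move=> i j /enum_val_inj /cast_ord_inj.
exists lab; split=> // a; apply/esym/eqP.
rewrite eqEcard card_imset // card_ord card_L leqnn andbT.
by apply/subsetP => _ /imsetP [j _ ->]; apply: enum_valP.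
Qed.

Section Labeling.

Variables (V W : finType) (L : V -> {set W}) (m : nat) (lab : V -> 'I_m -> W).
Hypothesis lab_inj : forall a, injective (lab a).
Hypothesis L_lab : forall a, L a = [set lab a j | j in 'I_m].
Hypothesis L_cover : forall w, exists a, w \in L a.
Hypothesis L_disjoint : forall a b w, w \in L a -> w \in L b -> a = b.

Lemma lab_in a i : lab a i \in L a.
Proof. by rewrite L_lab imset_f. Qed.

Lemma lab_eq a b i j : (lab a i == lab b j) = (a == b) && (i == j).
Proof.
apply/eqP/andP => [eq_lab | [/eqP <- /eqP <-] //].
have eq_ab : a = b by apply: (L_disjoint (lab_in a i)); rewrite eq_lab lab_in.
by move: eq_lab; rewrite eq_ab => /lab_inj ->.
Qed.

Lemma lab_surj w : exists a i, w = lab a i.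
Proof.
have [a] := L_cover w; rewrite L_lab => /imsetP [i _ ->].
by exists a, i.
Qed.

Lemma card_L a : #|L a| = m.
Proof. by rewrite L_lab card_imset ?card_ord. Qed.

Section Independence.

Variable H : rel W.
Hypothesis L_clique : forall a x y, x \in L a -> y \in L a -> x != y -> H x y.

Lemma independent_meets_blocks (I : {set W}) :
  {in I &, forall x y, ~~ H x y} -> #|I| = #|V| -> forall a, exists i, lab a i \in I.
Proof.
move=> indep_I card_I a.
have unlab_ex w : exists p : V * 'I_m, lab p.1 p.2 = w.
  by have [b [i ->]] := lab_surj w; exists (b, i).
have [unlab unlabK] := fin_all_exists unlab_ex.
pose blk w := (unlab w).1.
have blk_in w : w \in L (blk w) by rewrite -{1}(unlabK w) lab_in.
have blk_inj : {in I &, injective blk}.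
  move=> x y xI yI eq_blk; apply/eqP; apply: contraTT (indep_I x y xI yI) => neq_xy.
  by rewrite negbK (L_clique (blk_in x)) // eq_blk.
have : a \in [set blk x | x in I].
  have -> : [set blk x | x in I] = setT.
    by apply/eqP; rewrite eqEcard subsetT cardsT card_in_imset // card_I leqnn.
  by rewrite inE.
case/imsetP => x xI ->; exists (unlab x).2.
by rewrite unlabK.
Qed.

Lemma P_DP_lab :
  P_DP L H =
  #|[set c : {ffun V -> 'I_m} | [forall a, forall b, ~~ H (lab a (c a)) (lab b (c b))]]|.
Proof.
pose graph (c : {ffun V -> 'I_m}) := [set lab a (c a) | a : V].
have graph_inj : injective graph.
  move=> c c' eq_graph; apply/ffunP => a.
  have : lab a (c a) \in graph c' by rewrite -eq_graph imset_f.
  case/imsetP => b _ /eqP; rewrite lab_eq => /andP [/eqP <- /eqP //].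
have card_graph c : #|graph c| = #|V|.
  by rewrite card_imset // => a b /eqP; rewrite lab_eq => /andP [/eqP].
rewrite /P_DP -(card_imset _ graph_inj); apply: eq_card => I; rewrite !inE.
apply/andP/imsetP => [[/forall_inP indep_I /eqP card_I] | [c]].
- have indep x y : x \in I -> y \in I -> ~~ H x y.
    by move=> xI yI; move/forall_inP: (indep_I x xI); apply.
  have [c_of c_ofP] := fin_all_exists (independent_meets_blocks indep card_I).
  exists [ffun a => c_of a].
    by rewrite inE; apply/forallP => a; apply/forallP => b; rewrite !ffunE indep.
  apply/eqP; rewrite eq_sym eqEcard card_graph card_I leqnn andbT.
  by apply/subsetP => _ /imsetP [a _ ->]; rewrite ffunE.
- rewrite inE => /forallP indep_c ->; split; last by rewrite card_graph.
  apply/forall_inP => _ /imsetP [a _ ->]; apply/forall_inP => _ /imsetP [b _ ->].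
  exact: (forallP (indep_c a)) b.
Qed.

End Independence.

Lemma P_DP_edge_lift (adj : rel V) (u v : V) (H : rel W) :
    is_cover adj L H ->
    (forall a b, del_edge adj u v a b -> forall j, H (lab a j) (lab b j)) ->
  P_DP L H =
  #|[set c | proper_coloring (del_edge adj u v) c && ~~ H (lab u (c u)) (lab v (c v))]|.
Proof.
move=> [[H_sym H_irr] [_ [_ [L_clique [H_cross H_match]]]]] H_lift.
rewrite (P_DP_lab L_clique); apply: eq_card => c; rewrite !inE.
apply/forallP/andP => [indep_c | [proper_c avoid_uv] a].
  split; last exact: (forallP (indep_c u)).
  apply/forallP => x; apply/forallP => y; apply/implyP => xy.
  by apply/eqP => eq_cxy; move: (forallP (indep_c x) y); rewrite eq_cxy H_lift.
apply/forallP => b; apply/negP => H_ab.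
have [eq_ab | adj_ab] := H_cross a b _ _ (lab_in a (c a)) (lab_in b (c b)) H_ab.
  by move: H_ab; rewrite eq_ab (negbTE (H_irr _)).
have [/orP [] /andP [/eqP eq_au /eqP eq_bv] | not_uv] :=
  boolP ((a == u) && (b == v) || (a == v) && (b == u)).
- by move: avoid_uv; rewrite -eq_au -eq_bv H_ab.
- by move: avoid_uv; rewrite -eq_au -eq_bv H_sym H_ab.
have del_ab : del_edge adj u v a b by rewrite /del_edge adj_ab not_uv.
have /lab_inj eq_cab := H_match a b adj_ab _ _ _ (lab_in a (c a)) (lab_in b (c b))
  (lab_in b (c a)) H_ab (H_lift a b del_ab (c a)).
by move: (forallP (forallP proper_c a) b); rewrite del_ab eq_cab eqxx.
Qed.

Section SwitchedCover.

Variables (adj : rel V) (u v : V) (s : {perm 'I_m}).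
Hypothesis adj_simple : simple_graph adj.
Hypothesis adj_uv : adj u v.

Local Notation adj' := (del_edge adj u v).

Definition switch_adj (p q : V * 'I_m) : bool :=
  [|| p.1 == q.1, adj' p.1 q.1 && (p.2 == q.2),
      [&& p.1 == u, q.1 == v & q.2 == s p.2] | [&& p.1 == v, q.1 == u & p.2 == s q.2]].

(* Stated through the preimages of x and y under the labeling, so that no
   inverse of lab needs to be chosen. *)
Definition switched_cover : rel W := fun x y =>
  (x != y) && [exists p, exists q, [&& x == lab p.1 p.2, y == lab q.1 q.2 & switch_adj p q]].

Lemma switched_cover_lab a i b j :
  switched_cover (lab a i) (lab b j) = ((a, i) != (b, j)) && switch_adj (a, i) (b, j).
Proof.
rewrite /switched_cover lab_eq xpair_eqE; congr (_ && _); apply/existsP/idP.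
  case=> p /existsP [q /and3P []]; rewrite !lab_eq.
  by case: p q => [a' i'] [b' j'] /= /andP [/eqP <- /eqP <-] /andP [/eqP <- /eqP <-].
by move=> sw; exists (a, i); apply/existsP; exists (b, j); rewrite !eqxx.
Qed.

Lemma switch_adj_sym p q : switch_adj p q = switch_adj q p.
Proof.
rewrite /switch_adj eq_sym (del_edge_sym _ _ (proj1 adj_simple)) [p.2 == _]eq_sym.
rewrite (andbCA (q.1 == u)) (andbCA (q.1 == v)).
by do 2 congr (_ || _); rewrite orbC.
Qed.

Lemma neq_uv : u != v.
Proof. by apply: contraTneq adj_uv => ->; apply: (proj2 adj_simple). Qed.

Lemma switch_adj_functional a b i j j' :
  a != b -> switch_adj (a, i) (b, j) -> switch_adj (a, i) (b, j') -> j = j'.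
Proof.
rewrite /switch_adj /del_edge /= => /negbTE-> /=.
have [/andP [/eqP -> /eqP ->] | not_uv] := boolP ((a == u) && (b == v)).
  by rewrite !eqxx (negbTE neq_uv) /= !andbF /= !orbF => /eqP -> /eqP.
have [/andP [/eqP -> /eqP ->] | not_vu] := boolP ((a == v) && (b == u)).
  by rewrite !eqxx eq_sym (negbTE neq_uv) /= !andbF /= => /eqP -> /eqP /perm_inj.
rewrite !andbA (negbTE not_uv) (negbTE not_vu) /= !orbF !andbT.
by move=> /andP [_ /eqP <-] /andP [_ /eqP].
Qed.

Lemma switched_cover_mfold : is_mfold_cover adj L switched_cover m.
Proof.
split; last exact: card_L.
split; [split | do 2 (split; first by [])].
- move=> x y; have [a [i ->]] := lab_surj x; have [b [j ->]] := lab_surj y.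
  by rewrite !switched_cover_lab eq_sym switch_adj_sym.
- by move=> x; rewrite /switched_cover eqxx.
split; [|split].
- move=> a _ _ /[!L_lab] /imsetP [i _ ->] /imsetP [j _ ->].
  by rewrite switched_cover_lab xpair_eqE -lab_eq => ->; rewrite /switch_adj eqxx.
- move=> a b _ _ /[!L_lab] /imsetP [i _ ->] /imsetP [j _ ->].
  rewrite switched_cover_lab /switch_adj /= => /andP [_ /or4P [/eqP -> |
    /andP [/del_edgeW adj_ab _] | /and3P [/eqP -> /eqP -> _] | /and3P [/eqP -> /eqP -> _]]].
  + by left.
  + by right.
  + by right.
  + by right; rewrite (proj1 adj_simple).
- move=> a b adj_ab _ _ _ /[!L_lab] /imsetP [i _ ->] /imsetP [j _ ->] /imsetP [j' _ ->].
  have neq_ab : a != b by apply: contraTneq adj_ab => ->; apply: (proj2 adj_simple).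
  rewrite !switched_cover_lab => /andP [_ sw] /andP [_ sw'].
  by rewrite (switch_adj_functional neq_ab sw sw').
Qed.

Lemma switched_cover_lift a b : adj' a b -> forall j, switched_cover (lab a j) (lab b j).
Proof.
move=> adj'_ab j; have neq_ab : a != b.
  by apply: contraTneq adj'_ab => ->; apply: contraNN (proj2 adj_simple b) => /del_edgeW.
by rewrite switched_cover_lab xpair_eqE (negbTE neq_ab) /switch_adj /= adj'_ab eqxx orbT.
Qed.

Lemma switched_cover_uv i j : switched_cover (lab u i) (lab v j) = (j == s i).
Proof.
rewrite switched_cover_lab xpair_eqE /switch_adj /del_edge /= !eqxx (negbTE neq_uv) /=.
by rewrite andbF orbF.
Qed.

Lemma P_DP_switched_cover :
  P_DP L switched_cover = #|[set c | proper_coloring adj' c && (c v != s (c u))]|.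
Proof.
rewrite (P_DP_edge_lift (proj1 switched_cover_mfold) switched_cover_lift).
by apply: eq_card => c; rewrite !inE switched_cover_uv.
Qed.

End SwitchedCover.

End Labeling.

Section DeletionCounts.

Variables (V : finType) (adj : rel V) (u v : V) (m : nat) (i0 j0 : 'I_m).
Hypothesis adj_simple : simple_graph adj.
Hypothesis adj_uv : adj u v.
Hypothesis neq_i0j0 : i0 != j0.

Local Notation adj' := (del_edge adj u v).
Local Notation N := (@nproper_at V 'I_m adj' u v).
Local Notation a := (N i0 i0).
Local Notation b := (N i0 j0).

Lemma chromE (G : rel V) : chrom G m = #|[set c : {ffun V -> 'I_m} | proper_coloring G c]|.
Proof. by []. Qed.

Let N_diag i : N i i = a. Proof. exact: nproper_at_diag. Qed.

Let N_offdiag i j : i != j -> N i j = b. Proof. by move/nproper_at_offdiag; apply. Qed.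

Lemma chrom_del_edge_pairs : chrom adj' m = m * (a + m.-1 * b).
Proof.
by rewrite chromE (card_proper_colorings _ _ u v) (sum_pair_counts N_diag N_offdiag) card_ord.
Qed.

Lemma chrom_pairs : chrom adj m = m * (m.-1 * b).
Proof.
rewrite chromE.
have -> : [set c : {ffun V -> 'I_m} | proper_coloring adj c] =
          [set c | proper_coloring adj' c && (c u != c v)].
  by apply/setP => c; rewrite !inE (proper_coloring_del_edge _ adj_uv).
rewrite (card_proper_pairs _ _ _ (fun i j => i != j)).
by rewrite (sum_offdiag_pair_counts N_offdiag) card_ord.
Qed.

Lemma P_DP_lower_bound (W : finType) (L : V -> {set W}) (H : rel W) :
    is_cover adj L H -> natural_bijection adj' L (del_cross L H u v) m ->
  chrom adj' m - m * maxn a b <= P_DP L H.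
Proof.
move=> H_cover [lab [lab_inj [L_lab lab_parallel]]].
have [_ [L_cover [L_disjoint [_ [_ H_match]]]]] := H_cover.
have H_lift x y : adj' x y -> forall j, H (lab x j) (lab y j).
  by move=> adj'_xy j; case/andP: (lab_parallel x y adj'_xy j).
rewrite (P_DP_edge_lift lab_inj L_lab L_cover L_disjoint H_cover H_lift).
rewrite (card_proper_avoiding _ _ _ (fun i j => H (lab u i) (lab v j))) -chromE leq_sub2l //.
have := sum_matching_pair_counts_le N_diag N_offdiag (h := fun i j => H (lab u i) (lab v j)).
rewrite card_ord; apply=> i j j' H_ij H_ij'; apply: (lab_inj v).
exact: (H_match u v adj_uv _ _ _ (lab_in L_lab u i) (lab_in L_lab v j) (lab_in L_lab v j')).
Qed.

Lemma P_DP_lower_bound_attained (W : finType) (L : V -> {set W}) (H : rel W) :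
    is_mfold_cover adj L H m ->
  exists Hs, is_mfold_cover adj L Hs m /\ P_DP L Hs = chrom adj' m - m * maxn a b.
Proof.
move=> [[_ [L_cover [L_disjoint _]]] card_L].
have [lab [lab_inj L_lab]] := exists_labeling card_L.
have [s N_s] : exists s : {perm 'I_m}, forall i, N i (s i) = maxn a b.
  case: (leqP b a) => [le_ba | lt_ab].
    by exists 1%g => i; rewrite perm1 N_diag.
  have [s s_neq] := exists_derangement neq_i0j0.
  by exists s => i; rewrite N_offdiag 1?eq_sym.
exists (switched_cover lab adj u v s); split.
  exact: (switched_cover_mfold lab_inj L_lab L_cover L_disjoint s adj_simple adj_uv).
rewrite (P_DP_switched_cover lab_inj L_lab L_cover L_disjoint s adj_simple adj_uv).
rewrite (card_proper_avoiding _ _ _ (fun i j => j == s i)) -chromE.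
by rewrite (sum_graph_pair_counts N_s) card_ord.
Qed.

End DeletionCounts.

Local Open Scope ring_scope.

Lemma deletion_bound_natE (R : realFieldType) (m a b P' P : nat) :
    (1 < m)%N -> P' = (m * (a + m.-1 * b))%N -> P = (m * (m.-1 * b))%N ->
  P'%:R - Num.max (P'%:R - P%:R) (P%:R / (m - 1)%:R) = (P' - m * maxn a b)%:R :> R.
Proof.
move=> m_gt1 def_P' def_P.
have m1_neq0 : (m - 1)%:R != 0 :> R by rewrite pnatr_eq0 subn_eq0 -ltnNge.
have -> : P'%:R - P%:R = (m * a)%N%:R :> R by rewrite def_P' def_P mulnDr natrD addrK.
have -> : P%:R / (m - 1)%:R = (m * b)%N%:R :> R.
  by rewrite def_P mulnCA natrM -subn1 mulrC mulKf.
have le_max : (m * maxn a b <= P')%N.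
  rewrite def_P' leq_mul2l geq_max leq_addr /=; apply/orP; right.
  apply: leq_trans (leq_addl a _).
  by rewrite leq_pmull // -subn1 subn_gt0.
rewrite natrB //; congr (_ - _); case: (leqP a b) => [le_ab | /ltnW le_ba].
  by rewrite max_r // ler_nat leq_mul2l le_ab orbT.
by rewrite max_l // ler_nat leq_mul2l le_ba orbT.
Qed.

Theorem mainTheorem13 (V W : finType) (adjG : rel V) (m : nat) (L : V -> {set W})
    (H : rel W) (u v : V) :
  simple_graph adjG -> (2 <= m)%N -> is_mfold_cover adjG L H m -> adjG u v ->
  (natural_bijection (del_edge adjG u v) L (del_cross L H u v) m ->
     (P_DP L H)%:R >=
       (chrom (del_edge adjG u v) m)%:R
       - Num.max ((chrom (del_edge adjG u v) m)%:R - (chrom adjG m)%:R)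
                 ((chrom adjG m)%:R / (m - 1)%:R) :> rat) /\
  (exists Hs : rel W, is_mfold_cover adjG L Hs m /\
     (P_DP L Hs)%:R =
       (chrom (del_edge adjG u v) m)%:R
       - Num.max ((chrom (del_edge adjG u v) m)%:R - (chrom adjG m)%:R)
                 ((chrom adjG m)%:R / (m - 1)%:R) :> rat).
Proof.
move=> adj_simple m_gt1 H_cover adj_uv.
pose i0 : 'I_m := Ordinal (ltnW m_gt1); pose j0 : 'I_m := Ordinal m_gt1.
have neq_i0j0 : i0 != j0 by [].
rewrite (deletion_bound_natE _ m_gt1 (chrom_del_edge_pairs _ _ _ neq_i0j0)
                                     (chrom_pairs adj_uv neq_i0j0)).
split=> [nat_bij | ].
  by rewrite ler_nat (P_DP_lower_bound adj_uv neq_i0j0 (proj1 H_cover) nat_bij).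
have [Hs [Hs_cover P_DP_Hs]] := P_DP_lower_bound_attained adj_simple adj_uv neq_i0j0 H_cover.
by exists Hs; rewrite P_DP_Hs.
Qed.
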